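(* Let $f:[0,\infty)\to\mathbb{R}$ be convex with $f(1)=0$ and $G:[0,\mathsf{D_m}(f))\to[0,\infty)$ non-decreasing with $G(0)=0$. Then: (1) for a fixed channel $p_{Y|X}$ between finite alphabets, $I_{G,f}(X;Y)$ is a concave function of the input distribution $p_X$; (2) if $X\to Y\to Z$ is a Markov chain, then $I_{G,f}(X;Y)\ge I_{G,f}(X;Z)$; (3) if $X\to Y\to Z$ is a Markov chain, then $I_{G,f}(X;YZ)=I_{G,f}(X;Y)$ and $I_{G,f}(XY;Z)=I_{G,f}(Y;Z)$.
   Context: All random variables take values in finite sets. $D_f(p\|q)=\sum_y q(y) f(p(y)/q(y))$ with $0f(0/0)=0$; $\mathsf{D_m}(f)=f(0)+\lim_{t\to\infty}f(t)/t$. $I_{G,f}(X;Y)=\min_{q_Y}\sum_x p_X(x)\,G(D_f(p_{Y|X=x}\|q_Y))$, minimum over distributions on the alphabet of $Y$. $X\to Y\to Z$ Markov means $X$ and $Z$ are conditionally independent given $Y$. *)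

From mathcomp Require Import all_boot all_order all_algebra.
From mathcomp Require Import all_classical all_reals all_analysis.
Set Implicit Arguments. Unset Strict Implicit. Unset Printing Implicit Defensive.
Import Order.TTheory GRing.Theory Num.Theory.
Import numFieldNormedType.Exports.
Local Open Scope classical_set_scope.
Local Open Scope ring_scope.

Section Defs.
Variable R : realType.

Definition is_pmf (T : finType) (p : T -> R) : Prop :=
  (forall t, 0 <= p t) /\ \sum_(t : T) p t = 1.

Definition convex_on_nonneg (f : R -> R) : Prop :=
  forall x y t, 0 <= x -> 0 <= y -> 0 <= t <= 1 ->
    f (t * x + (1 - t) * y) <= t * f x + (1 - t) * f y.

Definition slope_inf (f : R -> R) : \bar R :=
  lim ((fun t : R => (f t / t)%:E) @ pinfty_nbhs R).

Definition Dm (f : R -> R) : \bar R := ((f 0)%:E + slope_inf f)%E.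

(* f-divergence D_f(p || q) = sum_y q(y) f(p(y)/q(y)), with the conventions
   0 f(0/0) = 0 and 0 f(a/0) = a lim_{t->oo} f(t)/t for a > 0. *)
Definition Df (f : R -> R) (T : finType) (p q : T -> R) : \bar R :=
  (\sum_(y : T)
     (if (0 < q y)%R then (q y * f (p y / q y))%:E
      else if (0 < p y)%R then (p y)%:E * slope_inf f else 0))%E.

(* G is given on [0, D_m(f)); at the endpoint D_m(f) (reached by D_f exactly
   when the value is the maximal one) it is extended by its left limit,
   i.e. its supremum over [0, D_m(f)) (G is non-decreasing). *)
Definition Gext (f : R -> R) (G : R -> R) (d : \bar R) : \bar R :=
  if (d < Dm f)%E then (G (fine d))%:E
  else ereal_sup [set (G r)%:E | r in [set r : R | 0 <= r /\ (r%:E < Dm f)%E]].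

(* I_{G,f}(X;Y) = min_{q_Y} sum_x p_X(x) G(D_f(p_{Y|X=x} || q_Y))
   (taken as an infimum over distributions q_Y), from input pX and channel W *)
Definition Imut (f G : R -> R) (A B : finType) (pX : A -> R) (W : A -> B -> R)
  : \bar R :=
  ereal_inf [set (\sum_(a : A) (pX a)%:E * Gext f G (Df f (W a) q))%E
            | q in [set q : B -> R | is_pmf q]].

Definition marg1 (A B : finType) (P : A * B -> R) (a : A) : R :=
  \sum_(b : B) P (a, b).
Definition cond (A B : finType) (P : A * B -> R) (a : A) (b : B) : R :=
  P (a, b) / marg1 P a.

Definition Ijoint (f G : R -> R) (A B : finType) (P : A * B -> R) : \bar R :=
  Imut f G (marg1 P) (cond P).

(* X -> Y -> Z Markov: X and Z conditionally independent given Y,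
   p(x,y,z) p(y) = p(x,y) p(y,z) *)
Definition markov3 (X Y Z : finType) (P : X * Y * Z -> R) : Prop :=
  forall x y z,
    P (x, y, z) * (\sum_(x' : X) \sum_(z' : Z) P (x', y, z')) =
    (\sum_(z' : Z) P (x, y, z')) * (\sum_(x' : X) P (x', y, z)).

Definition pXY (X Y Z : finType) (P : X * Y * Z -> R) : X * Y -> R :=
  fun xy => \sum_(z : Z) P (xy.1, xy.2, z).
Definition pXZ (X Y Z : finType) (P : X * Y * Z -> R) : X * Z -> R :=
  fun xz => \sum_(y : Y) P (xz.1, y, xz.2).
Definition pYZ (X Y Z : finType) (P : X * Y * Z -> R) : Y * Z -> R :=
  fun yz => \sum_(x : X) P (x, yz.1, yz.2).
Definition pX_YZ (X Y Z : finType) (P : X * Y * Z -> R) : X * (Y * Z) -> R :=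
  fun t => P (t.1, t.2.1, t.2.2).

End Defs.

From mathcomp Require Import all_boot all_order all_algebra.
From mathcomp Require Import all_classical all_reals all_analysis.
From mathcomp Require Import lra ring.
(* D_f(p || q) is the sum over letters of the perspective b f(a/b) of f, which
   is positively homogeneous and subadditive; hence feeding p and q through a
   common channel can only decrease D_f, and D_f >= 0 on distributions since
   f(1) = 0.  As G is nondecreasing, composing every p_{Y|X=x} with a channel
   K and transporting each candidate q_Y by K shows that I_{G,f} decreases
   when the output is garbled.  A Markov chain X -> Y -> Z is a factorization
   p(x,y,z) = p(x,y) K(y,z), so p_{Z|X=x} and p_{YZ|X=x} are garblings of
   p_{Y|X=x} (and p_{Y|X=x} one of p_{YZ|X=x}), while p_{Z|XY=(x,y)} = K(y) =
   p_{Z|Y=y}.  Concavity holds because I_{G,f} is an infimum over q_Y of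
   functions affine in p_X. *)

Set Implicit Arguments. Unset Strict Implicit. Unset Printing Implicit Defensive.
Import Order.TTheory GRing.Theory Num.Theory.
Import numFieldNormedType.Exports.
Local Open Scope classical_set_scope.
Local Open Scope ring_scope.

Lemma cvgr_cst_divy (R : realType) (c : R) : c / x @[x --> +oo] --> 0.
Proof.
rewrite -(mulr0 c); apply: cvgM; first exact: cvg_cst.
apply/(gtr0_cvgV0 _).2; last exact: cvg_id.
by near=> x; near: x; apply: nbhs_pinfty_gt; rewrite num_real.
Unshelve. all: by end_near.
Qed.

Section Channels.
Variable R : realType.

Definition push (B C : finType) (p : B -> R) (K : B -> C -> R) (c : C) : R :=
  \sum_(b : B) p b * K b c.

Lemma push_pmf (B C : finType) (p : B -> R) (K : B -> C -> R) :
  is_pmf p -> (forall b, is_pmf (K b)) -> is_pmf (push p K).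
Proof.
move=> [p0 p1] Kpmf; split=> [c|].
  by apply: sumr_ge0 => b _; rewrite mulr_ge0 //; case: (Kpmf b).
rewrite exchange_big /= -[RHS]p1; apply: eq_bigr => b _.
by rewrite -mulr_sumr; case: (Kpmf b) => _ ->; rewrite mulr1.
Qed.

Lemma sumr_pred1 (T : finType) (t : T) (F : T -> R) :
  \sum_(u : T) (u == t)%:R * F u = F t.
Proof.
by rewrite (bigD1 t) //= eqxx mul1r big1 ?addr0 // => u /negbTE ->; rewrite mul0r.
Qed.

Definition det_kernel (B C : finType) (g : B -> C) (b : B) (c : C) : R :=
  (g b == c)%:R.

Lemma det_kernel_pmf (B C : finType) (g : B -> C) (b : B) : is_pmf (det_kernel g b).
Proof.
split=> [c|]; first by rewrite ler0n.
by under eq_bigr => c _ do rewrite /det_kernel eq_sym -[_%:R]mulr1; rewrite sumr_pred1.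
Qed.

Definition graph_kernel (B C : finType) (K : B -> C -> R) (b : B) (u : B * C) : R :=
  (u.1 == b)%:R * K b u.2.

Lemma graph_kernel_pmf (B C : finType) (K : B -> C -> R) (b : B) :
  is_pmf (K b) -> is_pmf (graph_kernel K b).
Proof.
move=> [K0 K1]; split=> [u|]; first by rewrite mulr_ge0 ?ler0n.
rewrite -(pair_bigA _ (fun b' c => (b' == b)%:R * K b c)) /=.
by under eq_bigr => b' _ do rewrite -mulr_sumr; rewrite sumr_pred1.
Qed.

End Channels.

Section ConvexPerspective.
Variables (R : realType) (f : R -> R).
Hypothesis f_cvx : convex_on_nonneg f.

Lemma convex_chord_le (a b d : R) : 0 <= a -> a < b -> b <= d ->
  (f b - f a) * (d - a) <= (f d - f a) * (b - a).
Proof.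
move=> a0 ab bd; have da : 0 < d - a by lra.
set l := (b - a) / (d - a).
have el : l * (d - a) = b - a by rewrite /l mulfVK // gt_eqF.
have l0 : 0 <= l by rewrite /l divr_ge0 // ?ltW // subr_gt0.
have l1 : l <= 1 by rewrite /l ler_pdivrMr // mul1r; lra.
have d0 : 0 <= d by rewrite (le_trans a0) // ltW // (lt_le_trans ab).
have := @f_cvx d a l d0 a0 (introT andP (conj l0 l1)).
have -> : l * d + (1 - l) * a = b by lra.
move=> fb_le.
have -> : (f d - f a) * (b - a) = (l * f d + (1 - l) * f a - f a) * (d - a).
  by rewrite -el; ring.
by apply: ler_wpM2r; [exact: ltW | lra].
Qed.

(* f(T)/T is, up to the vanishing term f(0)/T, the nondecreasing chord slope
   (f(T) - f(0))/T. *)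
Lemma slope_inf_cvg : cvg ((f x / x)%:E @[x --> +oo]).
Proof.
set m := fun x : R => ((f (Num.max x 1) - f 0) / Num.max x 1)%:E.
have m_nd : {homo m : x y / x <= y >-> (x <= y)%E}.
  move=> x y xy; rewrite /m lee_fin.
  have x1 : 1 <= Num.max x 1 by rewrite le_max lexx orbT.
  have xy1 : Num.max x 1 <= Num.max y 1 by rewrite ge_max !le_max xy lexx orbT.
  have := convex_chord_le (lexx 0) (lt_le_trans ltr01 x1) xy1; rewrite !subr0.
  rewrite ler_pdivrMr ?(lt_le_trans ltr01) // mulrAC.
  by rewrite ler_pdivlMr // (lt_le_trans ltr01 (le_trans x1 xy1)).
have f0y : (f 0 / x)%:E @[x --> +oo] --> (0 : R)%:E.
  by apply/fine_cvgP; split; [near=> x | exact: cvgr_cst_divy].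
have := cvgeD (fin_num_adde_defl _ (isT : (0 : R)%:E \is a fin_num))
  (nondecreasing_cvge m_nd) f0y.
move=> mf0y; apply/cvg_ex; exists (ereal_sup (range m) + 0)%E.
apply: cvg_trans (mf0y _); apply: near_eq_cvg; near=> x.
have x1 : 1 < x by near: x; apply: nbhs_pinfty_gt; rewrite num_real.
rewrite /m /= (max_idPl (ltW x1)) -EFinD; congr (_%:E).
by field; rewrite gt_eqF // (lt_trans ltr01 x1).
Unshelve. all: by end_near.
Qed.

Lemma slope_le_slope_inf (u t : R) : 0 <= u -> 0 < t ->
  (((f (u + t) - f u) / t)%:E <= slope_inf f)%E.
Proof.
move=> u0 t0; set c := (f (u + t) - f u) / t.
have ct : c * t = f (u + t) - f u by rewrite /c mulfVK // gt_eqF.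
apply/lee_subgt0Pr => e e0; apply: lime_ge; first exact: slope_inf_cvg.
near=> x.
have x_gt : u + t < x by near: x; apply: nbhs_pinfty_gt; rewrite num_real.
have x_big : `|f u - c * u| / e < x by near: x; apply: nbhs_pinfty_gt; rewrite num_real.
have x0 : 0 < x by apply: lt_trans x_gt; lra.
have ut : u < u + t by lra.
have := convex_chord_le u0 ut (ltW x_gt).
rewrite -ct mulrAC (_ : u + t - u = t); last by ring.
rewrite ler_pM2r // => fx_ge.
rewrite ltr_pdivrMr // in x_big.
have : c * u - f u < x * e by apply: le_lt_trans x_big; rewrite -normrN opprB ler_norm.
by rewrite -EFinB lee_fin ler_pdivlMr //; nra.
Unshelve. all: by end_near.
Qed.

(* The perspective b f(a/b) of f, closed at b = 0 by the recession slope. *)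
Definition persp (a b : R) : \bar R :=
  if 0 < b then (b * f (a / b))%:E
  else if 0 < a then (a%:E * slope_inf f)%E else 0%E.

Lemma DfE (T : finType) (p q : T -> R) :
  Df f p q = (\sum_(y : T) persp (p y) (q y))%E.
Proof. by []. Qed.

Lemma persp0r (a : R) : 0 <= a -> persp a 0 = (a%:E * slope_inf f)%E.
Proof.
rewrite /persp ltxx le_eqVlt => /orP[/eqP <-|->] //.
by rewrite ltxx mul0e.
Qed.

Lemma perspZ (k a b : R) : 0 <= k -> 0 <= a -> 0 <= b ->
  persp (k * a) (k * b) = (k%:E * persp a b)%E.
Proof.
move=> k0 a0 b0; have [->|k_neq0] := eqVneq k 0.
  by rewrite !mul0r /persp ltxx mul0e.
have kp : 0 < k by rewrite lt_def k_neq0.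
have [->|b_neq0] := eqVneq b 0.
  by rewrite mulr0 !persp0r ?mulr_ge0 // EFinM muleA.
have bp : 0 < b by rewrite lt_def b_neq0.
rewrite /persp mulr_gt0 // bp -EFinM mulrA.
by rewrite invfM mulrACA mulfV ?gt_eqF // mul1r.
Qed.

Lemma persp_subadd0l (a1 a2 b : R) : 0 <= a1 -> 0 <= a2 -> 0 < b ->
  (persp (a1 + a2) b <= persp a1 0 + persp a2 b)%E.
Proof.
move=> a10 a20 b0; rewrite persp0r // /persp b0.
have [->|a1_neq0] := eqVneq a1 0; first by rewrite add0r mul0e add0e.
have a1p : 0 < a1 by rewrite lt_def a1_neq0.
have := slope_le_slope_inf (divr_ge0 a20 (ltW b0)) (divr_gt0 a1p b0).
rewrite -mulrDl [a2 + a1]addrC.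
case: (slope_inf f) => [r| |] //= => [|_]; last first.
  by rewrite gt0_muley ?lte_fin // addye // leey.
rewrite lee_fin ler_pdivrMr ?divr_gt0 // -EFinM -EFinD lee_fin.
move=> /(ler_wpM2l (ltW b0)).
have -> : b * (r * (a1 / b)) = a1 * r.
  by rewrite mulrCA [b * _]mulrC divfK ?gt_eqF // mulrC.
by rewrite mulrDr mulrN; lra.
Qed.

Lemma persp_subadd (a1 b1 a2 b2 : R) : 0 <= a1 -> 0 <= b1 -> 0 <= a2 -> 0 <= b2 ->
  (persp (a1 + a2) (b1 + b2) <= persp a1 b1 + persp a2 b2)%E.
Proof.
move=> a10 b10 a20 b20.
have [->|b1_neq0] := eqVneq b1 0.
  have [->|b2_neq0] := eqVneq b2 0.
    by rewrite addr0 !persp0r ?addr_ge0 // EFinD ge0_muleDl.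
  by rewrite add0r; apply: persp_subadd0l; rewrite // lt_def b2_neq0.
have b1p : 0 < b1 by rewrite lt_def b1_neq0.
have [->|b2_neq0] := eqVneq b2 0.
  by rewrite addr0 addeC addrC; apply: persp_subadd0l.
have b2p : 0 < b2 by rewrite lt_def b2_neq0.
have b12 : 0 < b1 + b2 by rewrite addr_gt0.
rewrite /persp b1p b2p b12 -EFinD lee_fin.
set l := b1 / (b1 + b2).
have l0 : 0 <= l by rewrite divr_ge0 // ltW.
have l1 : l <= 1 by rewrite ler_pdivrMr // mul1r lerDl.
have := @f_cvx (a1 / b1) (a2 / b2) l (divr_ge0 a10 (ltW b1p))
  (divr_ge0 a20 (ltW b2p)) (introT andP (conj l0 l1)).
have -> : l * (a1 / b1) + (1 - l) * (a2 / b2) = (a1 + a2) / (b1 + b2).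
  by rewrite /l; field; rewrite !gt_eqF.
move=> /(ler_wpM2l (ltW b12)); congr (_ <= _).
by rewrite /l; field; rewrite gt_eqF.
Qed.

Lemma persp_sum_le (I : Type) (r : seq I) (a b : I -> R) :
  (forall i, 0 <= a i) -> (forall i, 0 <= b i) ->
  (persp (\sum_(i <- r) a i) (\sum_(i <- r) b i)
     <= \sum_(i <- r) persp (a i) (b i))%E.
Proof.
move=> a0 b0; elim: r => [|i r IH]; first by rewrite !big_nil /persp ltxx.
rewrite !big_cons; apply: le_trans (leeD2l _ IH).
by apply: persp_subadd; rewrite ?sumr_ge0.
Qed.

(* Subadditivity of persp at each output letter c, then homogeneity to pull
   out K b c. *)
Lemma Df_push_le (B C : finType) (p q : B -> R) (K : B -> C -> R) :
  (forall b, 0 <= p b) -> (forall b, 0 <= q b) -> (forall b, is_pmf (K b)) ->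
  (Df f (push p K) (push q K) <= Df f p q)%E.
Proof.
move=> p0 q0 Kpmf; have K0 b c : 0 <= K b c by case: (Kpmf b).
rewrite !DfE; apply: (@le_trans _ _
  (\sum_(c : C) \sum_(b : B) persp (p b * K b c) (q b * K b c))%E).
  by apply: lee_sum => c _; apply: persp_sum_le => b; rewrite mulr_ge0.
rewrite exchange_big /=; apply: lee_sum => b _.
under eq_bigr => c _ do rewrite mulrC [q b * _]mulrC perspZ //.
rewrite -ge0_sume_distrl; last by move=> c _; rewrite lee_fin.
by rewrite sumEFin; case: (Kpmf b) => _ ->; rewrite mul1e.
Qed.

Hypothesis f1 : f 1 = 0.

Lemma Df_ge0 (T : finType) (p q : T -> R) : is_pmf p -> is_pmf q -> (0 <= Df f p q)%E.
Proof.
move=> [p0 p1] [q0 q1]; rewrite DfE; apply: le_trans (persp_sum_le _ p0 q0).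
by rewrite p1 q1 /persp ltr01 divr1 f1 mulr0.
Qed.

End ConvexPerspective.

Section MutualInformation.
Variables (R : realType) (f G : R -> R).
Hypothesis f_cvx : convex_on_nonneg f.
Hypothesis f1 : f 1 = 0.
Hypothesis Dm_pos : (0 < Dm f)%E.
Hypothesis G_nonneg : forall d : R, 0 <= d -> (d%:E < Dm f)%E -> 0 <= G d.
Hypothesis G_nondecr : forall d1 d2 : R, 0 <= d1 -> d1 <= d2 -> (d2%:E < Dm f)%E ->
  G d1 <= G d2.
Hypothesis G0 : G 0 = 0.

(* At the endpoint Gext is a supremum; D_m(f) > 0 puts G 0 = 0 in its range,
   so it is not the supremum of the empty set, -oo. *)
Lemma Gext_ge0 (d : \bar R) : (0 <= d)%E -> (0 <= Gext f G d)%E.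
Proof.
move=> d0; rewrite /Gext; case: ifPn => [dD|_].
  have dfin : d \is a fin_num by rewrite ge0_fin_numE // (lt_le_trans dD (leey _)).
  by rewrite lee_fin G_nonneg ?fine_ge0 ?fineK.
apply: le_ereal_sup_tmp; exists (G 0)%:E; last by rewrite G0.
by exists 0.
Qed.

Lemma Gext_le (d1 d2 : \bar R) : (0 <= d1)%E -> (d1 <= d2)%E ->
  (Gext f G d1 <= Gext f G d2)%E.
Proof.
move=> d10 d12; have d1fin : (d1 < Dm f)%E -> d1 \is a fin_num.
  by move=> d1D; rewrite ge0_fin_numE // (lt_le_trans d1D (leey _)).
rewrite /Gext; have [d2D|d2D] := boolP (d2 < Dm f)%E.
  have d1D : (d1 < Dm f)%E := le_lt_trans d12 d2D.
  have d2fin : d2 \is a fin_num.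
    by rewrite ge0_fin_numE ?(le_trans d10) // (lt_le_trans d2D (leey _)).
  rewrite d1D lee_fin G_nondecr ?fine_ge0 ?fineK ?d1fin //.
  by rewrite -lee_fin !fineK ?d1fin.
case: ifPn => // d1D.
by apply: ereal_sup_ubound; exists (fine d1); rewrite //= fine_ge0 ?fineK ?d1fin.
Qed.

Lemma eq_Imut (A B : finType) (pX : A -> R) (W W' : A -> B -> R) :
  (forall a, pX a != 0 -> W a = W' a) -> Imut f G pX W = Imut f G pX W'.
Proof.
move=> WW'; rewrite /Imut; congr ereal_inf; apply: eq_imagel => q _.
apply: eq_bigr => a _; have [->|/WW' -> //] := eqVneq (pX a) 0.
by rewrite !mul0e.
Qed.

Lemma Imut_comp (A A' B : finType) (pX : A -> R) (g : A -> A') (W : A' -> B -> R) :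
  (forall a, 0 <= pX a) ->
  Imut f G pX (fun a => W (g a)) = Imut f G (fun a' => \sum_(a | g a == a') pX a) W.
Proof.
move=> pX0; rewrite /Imut; congr ereal_inf; apply: eq_imagel => q _.
rewrite (partition_big g xpredT) //=; apply: eq_bigr => a' _.
rewrite -sumEFin ge0_sume_distrl => [|a _]; last by rewrite lee_fin.
by apply: eq_bigr => a /eqP ->.
Qed.

(* Pushing the candidate output law q through K yields a candidate for the
   garbled channel whose every divergence is smaller. *)
Lemma Imut_push_le (A B C : finType) (pX : A -> R) (W : A -> B -> R)
    (K : B -> C -> R) :
  (forall a, 0 <= pX a) -> (forall a, 0 < pX a -> is_pmf (W a)) ->
  (forall b, is_pmf (K b)) ->
  (Imut f G pX (fun a => push (W a) K) <= Imut f G pX W)%E.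
Proof.
move=> pX0 Wpmf Kpmf; apply: le_ereal_inf_tmp => _ [q qpmf <-].
apply: ge_ereal_inf.
exists (\sum_a (pX a)%:E * Gext f G (Df f (push (W a) K) (push q K)))%E.
  by exists (push q K) => //; apply: push_pmf.
apply: lee_sum => a _; have [->|pXa_neq0] := eqVneq (pX a) 0; first by rewrite !mul0e.
have /Wpmf Wa : 0 < pX a by rewrite lt_def pXa_neq0 pX0.
apply: lee_wpmul2l; first by rewrite lee_fin.
apply: Gext_le; first by apply: Df_ge0 => //; apply: push_pmf.
by apply: Df_push_le => //; [case: Wa | case: qpmf].
Qed.

(* For each candidate q the objective is affine in the input law, and an
   infimum of affine functions is concave. *)
Lemma Imut_concave (A B : finType) (W : A -> B -> R) (p1 p2 : A -> R) (l : R) :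
  (forall a, is_pmf (W a)) -> is_pmf p1 -> is_pmf p2 -> 0 <= l <= 1 ->
  (l%:E * Imut f G p1 W + (1 - l)%:E * Imut f G p2 W
     <= Imut f G (fun a => l * p1 a + (1 - l) * p2 a)%R W)%E.
Proof.
move=> Wpmf [p10 _] [p20 _] /andP[l0 l1]; have l0' : 0 <= 1 - l by rewrite subr_ge0.
apply: le_ereal_inf_tmp => _ [q qpmf <-].
set D := fun a => Gext f G (Df f (W a) q).
have D0 a : (0 <= D a)%E by apply/Gext_ge0/Df_ge0.
have -> : (\sum_a (l * p1 a + (1 - l) * p2 a)%R%:E * D a =
    l%:E * (\sum_a (p1 a)%:E * D a) + (1 - l)%:E * (\sum_a (p2 a)%:E * D a))%E.
  rewrite !ge0_sume_distrr => [|a _|a _]; try by rewrite mule_ge0 ?lee_fin.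
  rewrite -big_split; apply: eq_bigr => a _ /=.
  by rewrite EFinD ge0_muleDl ?lee_fin ?mulr_ge0 // !EFinM !muleA.
by apply: leeD; apply: lee_wpmul2l; rewrite ?lee_fin //;
  apply: ereal_inf_lbound; exists q.
Qed.

End MutualInformation.

Section JointLaws.
Variable R : realType.

Lemma cond_pmf (A B : finType) (Q : A * B -> R) (a : A) :
  (forall t, 0 <= Q t) -> 0 < marg1 Q a -> is_pmf (cond Q a).
Proof.
move=> Q0 m0; split=> [b|]; first by rewrite divr_ge0 // ltW.
by rewrite -mulr_suml divff // gt_eqF.
Qed.

Lemma push_cond (A B C : finType) (Q : A * B -> R) (K : B -> C -> R) (a : A) :
  push (cond Q a) K = fun c => (\sum_b Q (a, b) * K b c) / marg1 Q a.
Proof.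
by apply: funext => c; rewrite /push mulr_suml; apply: eq_bigr => b _; rewrite mulrAC.
Qed.

Lemma cond_kernel (A B : finType) (Q : A * B -> R) (K : A -> B -> R) (a : A) :
  (forall b, Q (a, b) = marg1 Q a * K a b) -> marg1 Q a != 0 -> cond Q a = K a.
Proof. by move=> QK m0; apply: funext => b; rewrite /cond QK mulrC mulKf. Qed.

End JointLaws.

Section MarkovFactorization.
Variables (R : realType) (X Y Z : finType) (P : X * Y * Z -> R).
Hypothesis P_pmf : is_pmf P.

Lemma markov3_factor : markov3 P ->
  exists2 K : Y -> Z -> R,
    (forall y, is_pmf (K y)) & forall x y z, P (x, y, z) = pXY P (x, y) * K y z.
Proof.
case: P_pmf => P0 Psum Pmarkov.
have [[[_ _] z0] _] : exists t, true && (0 < P t).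
  apply: psumr_neq0P => [t _|]; first exact: P0.
  by rewrite Psum; apply/eqP; rewrite oner_neq0.
pose PY y := \sum_(x : X) \sum_(z : Z) P (x, y, z).
have PY0 y : 0 <= PY y by apply: sumr_ge0 => x _; apply: sumr_ge0.
have PY_eq0 y x z : PY y = 0 -> P (x, y, z) = 0.
  move=> /(psumr_eq0P (fun x _ => sumr_ge0 _ (fun z _ => P0 _))) /(_ x isT).
  by move=> /(psumr_eq0P (fun z _ => P0 _)) /(_ z isT).
(* where p(y) = 0 the kernel is arbitrary; a point mass keeps it a law *)
exists (fun y z => if PY y == 0 then (z == z0)%:R else (\sum_x P (x, y, z)) / PY y).
  move=> y; case: eqP => [_|/eqP PYy_neq0]; split.
  - by move=> z; rewrite ler0n.
  - by rewrite (bigD1 z0) //= eqxx big1 ?addr0 // => z /negbTE ->.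
  - by move=> z; apply: divr_ge0 => //; apply: sumr_ge0.
  - by rewrite -mulr_suml exchange_big divff.
move=> x y z; rewrite /pXY /=; case: eqP => [PYy0|/eqP PYy_neq0].
  by rewrite !PY_eq0 // big1 ?mul0r // => z' _; rewrite PY_eq0.
by rewrite mulrA -Pmarkov mulfK.
Qed.

End MarkovFactorization.

Section MarkovChain.
Variables (R : realType) (X Y Z : finType) (P : X * Y * Z -> R) (K : Y -> Z -> R).
Hypothesis P_pmf : is_pmf P.
Hypothesis P_factor : forall x y z, P (x, y, z) = pXY P (x, y) * K y z.

Let P0 t : 0 <= P t. Proof. by case: P_pmf. Qed.

Lemma pXY_ge0 t : 0 <= pXY P t. Proof. exact: sumr_ge0. Qed.

Lemma marg1_pXY_ge0 x : 0 <= marg1 (pXY P) x.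
Proof. by apply: sumr_ge0 => y _; apply: pXY_ge0. Qed.

Lemma marg1_pXZ : marg1 (pXZ P) = marg1 (pXY P).
Proof. by apply: funext => x; rewrite /marg1 exchange_big. Qed.

Lemma marg1_pX_YZ : marg1 (pX_YZ P) = marg1 (pXY P).
Proof. by apply: funext => x; rewrite /marg1 pair_bigA; apply: eq_bigr => -[]. Qed.

Lemma marg1_pYZ y : marg1 (pYZ P) y = \sum_(x : X) pXY P (x, y).
Proof. by rewrite /marg1 exchange_big. Qed.

Lemma cond_pXZ : cond (pXZ P) = fun x => push (cond (pXY P) x) K.
Proof.
apply: funext => x; rewrite push_cond -marg1_pXZ; apply: funext => z.
by congr (_ / _); apply: eq_bigr => y _; rewrite P_factor.
Qed.

Lemma cond_pX_YZ : cond (pX_YZ P) = fun x => push (cond (pXY P) x) (graph_kernel K).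
Proof.
apply: funext => x; rewrite push_cond -marg1_pX_YZ; apply: funext => -[y z].
congr (_ / _); rewrite /graph_kernel /=.
by under eq_bigr => y' _ do rewrite mulrCA eq_sym; rewrite sumr_pred1 /pX_YZ /= P_factor.
Qed.

Lemma cond_pXY : cond (pXY P) = fun x => push (cond (pX_YZ P) x) (det_kernel R fst).
Proof.
apply: funext => x; rewrite push_cond marg1_pX_YZ; apply: funext => y.
congr (_ / _); rewrite /det_kernel.
rewrite -(pair_bigA _ (fun y' z => P (x, y', z) * (y' == y)%:R)).
by under eq_bigr => y' _ do rewrite -mulr_suml mulrC; rewrite sumr_pred1.
Qed.

Lemma cond_XY_Z x y : marg1 P (x, y) != 0 -> cond P (x, y) = K y.
Proof. by apply: (cond_kernel (K := fun a : X * Y => K a.2)) => z; apply: P_factor. Qed.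

Lemma cond_pYZ y : marg1 (pYZ P) y != 0 -> cond (pYZ P) y = K y.
Proof.
apply: cond_kernel => z; rewrite marg1_pYZ mulr_suml.
by apply: eq_bigr => x _; rewrite P_factor.
Qed.

End MarkovChain.

Section MarkovInformation.
Variables (R : realType) (f G : R -> R).
Hypothesis f_cvx : convex_on_nonneg f.
Hypothesis f1 : f 1 = 0.
Hypothesis G_nondecr : forall d1 d2 : R, 0 <= d1 -> d1 <= d2 -> (d2%:E < Dm f)%E ->
  G d1 <= G d2.
Variables (X Y Z : finType) (P : X * Y * Z -> R) (K : Y -> Z -> R).
Hypothesis P_pmf : is_pmf P.
Hypothesis K_pmf : forall y, is_pmf (K y).
Hypothesis P_factor : forall x y z, P (x, y, z) = pXY P (x, y) * K y z.

Let P0 t : 0 <= P t. Proof. by case: P_pmf. Qed.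

Lemma Ijoint_pXZ_le : (Ijoint f G (pXZ P) <= Ijoint f G (pXY P))%E.
Proof.
rewrite /Ijoint marg1_pXZ (cond_pXZ P_factor).
apply: Imut_push_le => // [x|x m0]; first exact: marg1_pXY_ge0.
by apply: cond_pmf => // t; apply: pXY_ge0.
Qed.

Lemma Ijoint_pX_YZ : Ijoint f G (pX_YZ P) = Ijoint f G (pXY P).
Proof.
rewrite /Ijoint marg1_pX_YZ; apply/le_anti/andP; split.
  rewrite (cond_pX_YZ P_factor); apply: Imut_push_le => // [x|x m0|y].
  - exact: marg1_pXY_ge0.
  - by apply: cond_pmf => // t; apply: pXY_ge0.
  - exact: graph_kernel_pmf.
rewrite {1}cond_pXY; apply: Imut_push_le => // [x|x m0|y].
- exact: marg1_pXY_ge0.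
- by apply: cond_pmf => [t|]; [exact: P0 | rewrite marg1_pX_YZ].
- exact: det_kernel_pmf.
Qed.

Lemma Ijoint_pYZ : Ijoint f G P = Ijoint f G (pYZ P).
Proof.
rewrite /Ijoint (eq_Imut f G (W' := fun a : X * Y => K a.2)) => [|[x y]]; last first.
  exact: (cond_XY_Z P_factor).
rewrite Imut_comp => [|a]; last exact: sumr_ge0.
have -> : (fun y => \sum_(a | a.2 == y) marg1 P a) = marg1 (pYZ P).
  apply: funext => y; rewrite marg1_pYZ.
  have -> : \sum_(a | a.2 == y) marg1 P a = \sum_x \sum_(y' | y' == y) marg1 P (x, y').
    by rewrite [RHS]pair_big; apply: eq_big => -[].
  by apply: eq_bigr => x _; rewrite big_pred1_eq.
by apply: eq_Imut => y /(cond_pYZ P_factor) ->.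
Qed.

End MarkovInformation.

Theorem lemma2 (R : realType) (f G : R -> R)
  (f_cvx : convex_on_nonneg f) (f1 : f 1 = 0)
  (Dm_pos : (0%E < Dm f)%E)
  (G_nonneg : forall d : R, 0 <= d -> (d%:E < Dm f)%E -> 0 <= G d)
  (G_nondecr : forall d1 d2 : R, 0 <= d1 -> d1 <= d2 -> (d2%:E < Dm f)%E ->
                 G d1 <= G d2)
  (G0 : G 0 = 0) :
  (* (1) concavity in the input distribution, channel fixed *)
  (forall (X Y : finType) (W : X -> Y -> R) (p1 p2 : X -> R) (l : R),
      (forall x, is_pmf (W x)) -> is_pmf p1 -> is_pmf p2 -> 0 <= l <= 1 ->
      (l%:E * Imut f G p1 W + (1 - l)%:E * Imut f G p2 W
         <= Imut f G (fun x => l * p1 x + (1 - l) * p2 x)%R W)%E)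
  /\
  (* (2) data processing *)
  (forall (X Y Z : finType) (P : X * Y * Z -> R),
      is_pmf P -> markov3 P ->
      (Ijoint f G (pXZ P) <= Ijoint f G (pXY P))%E)
  /\
  (* (3) *)
  (forall (X Y Z : finType) (P : X * Y * Z -> R),
      is_pmf P -> markov3 P ->
      Ijoint f G (pX_YZ P) = Ijoint f G (pXY P) /\
      Ijoint f G P = Ijoint f G (pYZ P)).
Proof.
split=> [X Y W p1 p2 l|]; first exact: Imut_concave.
split=> X Y Z P P_pmf /(markov3_factor P_pmf) [K K_pmf P_factor].
  exact: Ijoint_pXZ_le.
by split; [exact: Ijoint_pX_YZ | exact: Ijoint_pYZ].
Qed.
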